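(* Let $n\ge 2$, $a,b,c\in\mathbb{Z}_n$ with $a\neq 0$ and $c$ invertible in $\mathbb{Z}_n$, and $P(x,y)=a+bx+cy$. Then the groupoid $(\mathbb{Z}_n,* )$ with $x*y=P(x,y)$ has the cross inverse property if and only if $bc\equiv 1\pmod n$.
   Context: $\mathbb{Z}_n$ is the ring of integers modulo $n$. Since $c$ is invertible, for each $x$ the map $y\mapsto x*y$ is a bijection, so there is a unique $e_\rho(x)$ with $x*e_\rho(x)=x$ (local right identity) and a unique $x^\rho$ with $x*x^\rho=e_\rho(x)$ (right inverse). The cross inverse property means $(x*y)*x^\rho=y$ for all $x,y\in\mathbb{Z}_n$. *)

From HB Require Import structures.
From mathcomp Require Import all_boot all_order all_algebra.
Set Implicit Arguments. Unset Strict Implicit. Unset Printing Implicit Defensive.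
Import GRing.Theory.
Local Open Scope ring_scope.

Definition linop (n : nat) (a b c : 'Z_n) (x y : 'Z_n) : 'Z_n := a + b * x + c * y.

(* Local right identity e_rho(x): the (unique, when y |-> x*y is bijective)
   y with x * y = x; picked from the finite type, default x if none. *)
Definition loc_right_id (T : finType) (op : T -> T -> T) (x : T) : T :=
  odflt x [pick y | op x y == x].

Definition right_inv (T : finType) (op : T -> T -> T) (x : T) : T :=
  odflt x [pick y | op x y == loc_right_id op x].

Definition cross_inverse_prop (T : finType) (op : T -> T -> T) : Prop :=
  forall x y : T, op (op x y) (right_inv op x) = y.

From HB Require Import structures.
From mathcomp Require Import all_boot all_order all_algebra.
From mathcomp Require Import ring.
Import GRing.Theory.
Local Open Scope ring_scope.

(* Since c is a unit, every equation x * y = t has a solution, so e_rho(x) and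
   x^rho satisfy c e_rho(x) = x - a - b x and c x^rho = e_rho(x) - a - b x.
   Multiplying the first by b gives e_rho(x) = b (x - a - b x) when bc = 1, and
   then (x * y) * x^rho = y is a ring identity.  Conversely, comparing the
   cross inverse property at (0, 0) and (0, 1) yields b c = 1. *)

Section LeftDivisible.

Context {T : finType} {op : T -> T -> T}.
Hypothesis op_solvable : forall x t, exists y, op x y = t.

Lemma op_pick_solves x t : op x (odflt x [pick y | op x y == t]) = t.
Proof.
case: pickP => [y /eqP //| none] /=.
by have [y /eqP] := op_solvable x t; rewrite none.
Qed.

Lemma op_loc_right_id x : op x (loc_right_id op x) = x.
Proof. exact: op_pick_solves. Qed.

Lemma op_right_inv x : op x (right_inv op x) = loc_right_id op x.
Proof. exact: op_pick_solves. Qed.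

End LeftDivisible.

Lemma linop_solvable {n : nat} (a b c : 'Z_n) :
  c \is a GRing.unit -> forall x t, exists y, linop a b c x y = t.
Proof.
move=> cU x t; exists (c^-1 * (t - a - b * x)).
by rewrite /linop mulrA divrr // mul1r; ring.
Qed.

Lemma cross_inverse_linop_mul1 (n : nat) (a b c : 'Z_n) :
  cross_inverse_prop (linop a b c) -> b * c = 1.
Proof.
move=> cip; have := cip 0 1; have := cip 0 0; rewrite /linop.
set r := right_inv _ _ => cip00 cip01.
have -> : b * c = (a + b * (a + b * 0 + c * 1) + c * r)
                  - (a + b * (a + b * 0 + c * 0) + c * r) by ring.
by rewrite cip01 cip00 subr0.
Qed.

Lemma linop_cross_inverse (n : nat) (a b c : 'Z_n) :
  c \is a GRing.unit -> b * c = 1 -> cross_inverse_prop (linop a b c).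
Proof.
move=> cU bc1 x y.
have solv := linop_solvable a b c cU.
have e_eq := op_loc_right_id solv x; have r_eq := op_right_inv solv x.
move: e_eq r_eq; rewrite /linop.
set e := loc_right_id _ _; set r := right_inv _ _ => e_eq r_eq.
have ce : c * e = x - a - b * x by rewrite -{1}e_eq; ring.
have e_def : e = b * (x - a - b * x) by rewrite -[LHS]mul1r -bc1 -mulrA ce.
have -> : c * r = e - a - b * x by rewrite -r_eq; ring.
rewrite e_def.
have -> : a + b * (a + b * x + c * y) + (b * (x - a - b * x) - a - b * x)
          = y + (b * c - 1) * y by ring.
by rewrite bc1 subrr mul0r addr0.
Qed.

Theorem mainTheorem17 (n : nat) (a b c : 'Z_n) :
  (1 < n)%N -> a != 0 -> c \is a GRing.unit ->
  cross_inverse_prop (linop a b c) <-> b * c = 1.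
Proof.
move=> _ _ cU; split; first exact: cross_inverse_linop_mul1.
exact: linop_cross_inverse.
Qed.
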